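(* Let $0<q<1$ and let $X$ be a random variable such that $A(a)=\mathbb{E}\exp_q(aX)$ is finite for all $a>0$. Then $\theta(a)=\dfrac{a}{A(a)^{1-q}}$ is an increasing function of $a$ on $(0,\infty)$.
   Context: For $q\in(0,2)$, $q\ne1$, the $q$-deformed exponential is $\exp_q(u)=[1+(1-q)u]_+^{1/(1-q)}$ for real $u$, where $[u]_+=\max(u,0)$. *)

From HB Require Import structures.
From mathcomp Require Import all_boot all_order all_algebra.
From mathcomp Require Import all_classical all_reals all_analysis.
Set Implicit Arguments. Unset Strict Implicit. Unset Printing Implicit Defensive.
Import Order.TTheory GRing.Theory Num.Theory.
Local Open Scope ring_scope.

Definition expq {R : realType} (q u : R) : R :=
  powR (Num.max (1 + (1 - q) * u) 0) (1 / (1 - q)).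

(* A(a) = E[exp_q(a X)]  (as a real number; used where it is finite) *)
Definition Aq {R : realType} {d} {T : measurableType d} (P : probability T R)
  (X : T -> R) (q a : R) : R :=
  fine (\int[P]_x (expq q (a * X x))%:E)%E.

Definition thetaq {R : realType} {d} {T : measurableType d} (P : probability T R)
  (X : T -> R) (q a : R) : R :=
  a / powR (Aq P X q a) (1 - q).

(* With r = 1/(1-q) and 0 <= a <= b, both a^r exp_q(b u) and b^r exp_q(a u)
   are of the form [c + (1-q) a b u]_+^r, with c = a and c = b respectively,
   so the first is at most the second, strictly wherever exp_q(a u) > 0.
   Integrating against the law of X gives a^r A(b) < b^r A(a): strictness
   survives because A(a) > 0 forces exp_q(a X) > 0 on a set of positive
   probability. Raising to the power 1-q yields a A(b)^(1-q) < b A(a)^(1-q),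
   that is theta(a) < theta(b). *)

From HB Require Import structures.
From mathcomp Require Import all_boot all_order all_algebra.
From mathcomp Require Import all_classical all_reals all_analysis.
From mathcomp Require Import measurable_realfun.
From mathcomp Require Import ring.
Import Order.TTheory GRing.Theory Num.Theory.
Local Open Scope ring_scope.

Section expq_facts.
Variable R : realType.
Implicit Types q u v c a b : R.

Lemma expq_ge0 q u : 0 <= expq q u.
Proof. exact: powR_ge0. Qed.

Lemma measurable_expq q : measurable_fun setT (expq q).
Proof.
apply: (measurableT_comp (measurable_powR _)).
apply: (measurable_maxr (f := fun u => 1 + (1 - q) * u) (g := cst 0)).
  by apply: measurable_funD => //; exact: measurable_funM.
exact: measurable_cst.
Qed.

(* [q != 1] rules out the exponent [0], for which [0 `^ 0 = 1]. *)
Lemma expq_gt0 q u : q != 1 -> 0 < expq q u -> 0 < 1 + (1 - q) * u.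
Proof.
move=> q1; rewrite /expq; have [//|_] := ltP 0 (1 + (1 - q) * u).
by rewrite powR0 ?ltxx // div1r invr_eq0 subr_eq0 eq_sym.
Qed.

Lemma powR_expqM q c v : 0 <= c ->
  c `^ (1 / (1 - q)) * expq q v =
  Num.max (c + (1 - q) * (c * v)) 0 `^ (1 / (1 - q)).
Proof.
move=> c0; rewrite /expq -powRM ?le_max ?lexx ?orbT //.
by rewrite maxr_pMr // mulr0 mulrDr mulr1 mulrCA.
Qed.

Lemma expq_cross_le q a b u : q < 1 -> 0 <= a <= b ->
  a `^ (1 / (1 - q)) * expq q (b * u) <= b `^ (1 / (1 - q)) * expq q (a * u).
Proof.
move=> q1 /andP[a0 ab].
rewrite !powR_expqM ?(le_trans a0 ab) // [a * (b * u)]mulrCA.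
apply: ge0_ler_powR.
- by rewrite divr_ge0 // subr_ge0 ltW.
- by rewrite nnegrE le_max lexx orbT.
- by rewrite nnegrE le_max lexx orbT.
- by apply: le_max2 => //; rewrite lerD2r.
Qed.

Lemma expq_cross_lt q a b u : q < 1 -> 0 <= a < b -> 0 < expq q (a * u) ->
  a `^ (1 / (1 - q)) * expq q (b * u) < b `^ (1 / (1 - q)) * expq q (a * u).
Proof.
move=> q1 /andP[a0 ab] /(expq_gt0 _ _ (negbT (lt_eqF q1))) base_gt0.
have b0 : 0 < b by apply: le_lt_trans ab.
have hb : 0 < b + (1 - q) * (b * (a * u)).
  by rewrite mulrCA -{1}[b]mulr1 -mulrDr mulr_gt0.
rewrite !powR_expqM ?(ltW b0) // [a * (b * u)]mulrCA.
apply: gt0_ltr_powR.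
- by rewrite divr_gt0 // subr_gt0.
- by rewrite nnegrE le_max lexx orbT.
- by rewrite nnegrE le_max lexx orbT.
- by rewrite (max_l (ltW hb)) gt_max hb andbT ltrD2r.
Qed.

End expq_facts.

Section integral_strict_monotonicity.
Context d (T : measurableType d) (R : realType) (mu : {measure set T -> \bar R}).
Local Open Scope ereal_scope.

Lemma ge0_integral_gt0_support (w h : T -> R) :
  measurable_fun setT w -> measurable_fun setT h ->
  (forall x, 0 <= w x)%R -> (forall x, 0 <= h x)%R ->
  (forall x, 0 < w x -> 0 < h x)%R ->
  0 < \int[mu]_x (w x)%:E -> 0 < \int[mu]_x (h x)%:E.
Proof.
move=> mw mh w0 h0 wh int_w_gt0.
rewrite lt_def integral_ge0 ?andbT; last by move=> x _; rewrite lee_fin.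
apply/negP => /eqP int_h0.
have h_ae0 : ae_eq mu setT (EFin \o h) (cst 0).
  apply/ae_eq_integral_abs => //; first exact/measurable_EFinP.
  by rewrite -[RHS]int_h0; apply: eq_integral => x _; rewrite gee0_abs ?lee_fin.
have w_ae0 : ae_eq mu setT (EFin \o w) (cst 0).
  apply: filterS h_ae0 => x /= hx /hx[hx0]; congr (_%:E).
  by apply/eqP; rewrite eq_le w0 andbT leNgt; apply/negP => /wh; rewrite hx0 ltxx.
move: int_w_gt0; rewrite (ae_eq_integral (cst 0)) ?integral0 ?ltxx //.
exact/measurable_EFinP.
Qed.

Lemma ge0_integral_lt (f g w : T -> R) :
  measurable_fun setT f -> measurable_fun setT g -> measurable_fun setT w ->
  (forall x, 0 <= g x <= f x)%R -> (forall x, 0 <= w x)%R ->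
  (forall x, 0 < w x -> g x < f x)%R ->
  0 < \int[mu]_x (w x)%:E -> \int[mu]_x (g x)%:E < +oo ->
  \int[mu]_x (g x)%:E < \int[mu]_x (f x)%:E.
Proof.
move=> mf mg mw gf w0 wgf int_w_gt0 int_g_fin.
have g0 x : (0 <= g x)%R by case/andP: (gf x).
have fg0 x : (0 <= f x - g x)%R by case/andP: (gf x) => _; rewrite subr_ge0.
have -> : \int[mu]_x (f x)%:E =
          \int[mu]_x (g x)%:E + \int[mu]_x (f x - g x)%:E.
  rewrite -ge0_integralD //; last 4 first.
  - by move=> x _; rewrite lee_fin.
  - exact/measurable_EFinP.
  - by move=> x _; rewrite lee_fin.
  - exact/measurable_EFinP/measurable_funB.
  by apply: eq_integral => x _; rewrite -EFinD subrKC.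
rewrite lteDl ?ge0_fin_numE ?integral_ge0 //; last by move=> x _; rewrite lee_fin.
apply: (@ge0_integral_gt0_support w (fun x => f x - g x)%R mw) => //.
- exact: measurable_funB.
- by move=> x /wgf; rewrite subr_gt0.
Qed.

End integral_strict_monotonicity.

Lemma powR_cross_lt (R : realType) (p a b A B : R) :
  0 < p -> 0 <= a -> 0 <= b -> 0 < A -> 0 < B ->
  a `^ (1 / p) * B < b `^ (1 / p) * A -> a / A `^ p < b / B `^ p.
Proof.
move=> p0 a0 b0 A0 B0 cross.
have rootK x : 0 <= x -> (x `^ (1 / p)) `^ p = x.
  by move=> x0; rewrite -powRrM mulrC mulrA mulr1 divff ?gt_eqF ?powRr1.
have ApB0 : 0 < A `^ p * B `^ p by rewrite mulr_gt0 ?powR_gt0.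
have {}cross : a * B `^ p < b * A `^ p.
  move: cross => /(gt0_ltr_powR p0); rewrite !powRM ?powR_ge0 ?ltW ?rootK //.
  by apply; rewrite nnegrE mulr_ge0 ?powR_ge0 ?ltW.
have Ap0 : A `^ p != 0 by rewrite gt_eqF ?powR_gt0.
have Bp0 : B `^ p != 0 by rewrite gt_eqF ?powR_gt0.
rewrite -(ltr_pM2r ApB0).
have -> : a / A `^ p * (A `^ p * B `^ p) = a * B `^ p by field.
have -> : b / B `^ p * (A `^ p * B `^ p) = b * A `^ p by field.
exact: cross.
Qed.

Theorem lemma2 (R : realType) (d : measure_display) (T : measurableType d)
  (P : probability T R) (X : {RV P >-> R}) (q : R) :
  0 < q -> q < 1 ->
  (forall a : R, 0 < a -> (\int[P]_x (expq q (a * X x))%:E < +oo)%E) ->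
  forall a b : R, 0 < a -> a < b ->
    0 < Aq P X q a -> 0 < Aq P X q b ->
    thetaq P X q a < thetaq P X q b.
Proof.
move=> _ q1 int_lty a b a0 ab Aa0 Ab0.
have b0 : 0 < b := lt_trans a0 ab.
have mexpqX c : measurable_fun setT (fun x => expq q (c * X x)).
  apply: (measurableT_comp (f := expq q) (g := fun x => c * X x)).
    exact: measurable_expq.
  by apply: measurable_funM; [exact: measurable_cst | exact: measurable_funPT].
have int_fin c : 0 < c -> (\int[P]_x (expq q (c * X x))%:E)%E \is a fin_num.
  by move=> c0; rewrite ge0_fin_numE ?int_lty // integral_ge0 // => x _; exact: expq_ge0.
have intZ c k : 0 <= k -> (\int[P]_x (k * expq q (c * X x))%:E =
                             k%:E * \int[P]_x (expq q (c * X x))%:E)%E.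
  move=> k0; under eq_integral do rewrite EFinM.
  rewrite ge0_integralZl_EFin //; last exact/measurable_EFinP.
  by move=> x _; rewrite lee_fin expq_ge0.
have int_lt : (\int[P]_x (a `^ (1 / (1 - q)) * expq q (b * X x))%:E <
                \int[P]_x (b `^ (1 / (1 - q)) * expq q (a * X x))%:E)%E.
  apply: (@ge0_integral_lt _ _ _ P _ _ (fun x => expq q (a * X x))) => //.
  - by apply: measurable_funM => //; exact: measurable_cst.
  - by apply: measurable_funM => //; exact: measurable_cst.
  - move=> x; rewrite mulr_ge0 ?powR_ge0 ?expq_ge0 //=.
    by apply: expq_cross_le; rewrite ?(ltW a0) ?(ltW ab).
  - by move=> x; exact: expq_ge0.
  - by move=> x; apply: expq_cross_lt; rewrite ?(ltW a0).
  - by rewrite -(fineK (int_fin a a0)) lte_fin.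
  - by rewrite intZ ?powR_ge0 // -(fineK (int_fin b b0)) -EFinM ltry.
move: int_lt; rewrite !intZ ?powR_ge0 // -(fineK (int_fin a a0)) -(fineK (int_fin b b0)).
rewrite -!EFinM lte_fin => cross.
by apply: powR_cross_lt; rewrite ?subr_gt0 ?ltW.
Qed.
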